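(* Let $(p_m)$ and $(q_n)$ belong to $SVA_{reg(\alpha)}$ (for some $\alpha\ge0$), and let $(u_{mn})$ be a double sequence of real numbers that is $(\overline{N},p,q)$ summable to a number $\ell$. If $(u_{mn})$ is slowly decreasing relative to $(P_m)$, slowly decreasing relative to $(Q_n)$, and slowly decreasing relative to $(P_m)$ or relative to $(Q_n)$ in the strong sense, then $(u_{mn})$ is $P$-convergent to $\ell$.
   Context: Weights: $(p_m)_{m\ge0},(q_n)_{n\ge0}$ are sequences of positive reals with $P_m=\sum_{i=0}^m p_i\to\infty$ and $Q_n=\sum_{j=0}^n q_j\to\infty$. $SVA_{reg(\alpha)}$ denotes the set of positive sequences $(p_m)$ whose partial sums have the form $P_m=(m+1)^{\alpha}L(m)$ ($m\ge0$) with a constant $\alpha\ge0$ and a slowly varying function $L$ on $(0,\infty)$, i.e. $L$ positive, measurable, and $L(\lambda t)/L(t)\to1$ as $t\to\infty$ for every $\lambda>0$. The weighted means are $\sigma_{mn}=\frac{1}{P_mQ_n}\sum_{i=0}^m\sum_{j=0}^n p_iq_ju_{ij}$; $(u_{mn})$ is $(\overline{N},p,q)$ summable to $\ell$ if $(\sigma_{mn})$ is $P$-convergent to $\ell$. A double sequence $(a_{mn})$ is $P$-convergent to $\ell$ if for every $\epsilon>0$ there is $n_0$ with $|a_{mn}-\ell|<\epsilon$ whenever $m,n\ge n_0$. For a real double array $(a_{mn})$, $\liminf_{m,n\to\infty}a_{mn}=\lim_{N\to\infty}\inf_{m,n\ge N}a_{mn}$. In the minima below, $i,j$ range over nonnegative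 integers satisfying the constraints. A real double sequence $(u_{mn})$ is: - slowly decreasing relative to $(P_m)$ if $\lim_{\lambda\to1^+}\liminf_{m,n\to\infty}\min_{P_m\le P_i\le\lambda P_m}(u_{in}-u_{mn})\ge0$; - slowly decreasing relative to $(Q_n)$ if $\lim_{\kappa\to1^+}\liminf_{m,n\to\infty}\min_{Q_n\le Q_j\le\kappa Q_n}(u_{mj}-u_{mn})\ge0$; - slowly decreasing relative to $(P_m)$ in the strong sense if $\lim_{\lambda,\kappa\to1^+}\liminf_{m,n\to\infty}\min_{P_m\le P_i\le\lambda P_m,\ Q_n\le Q_j\le\kappa Q_n}(u_{ij}-u_{mj})\ge0$; - slowly decreasing relative to $(Q_n)$ in the strong sense if $\lim_{\lambda,\kappa\to1^+}\liminf_{m,n\to\infty}\min_{P_m\le P_i\le\lambda P_m,\ Q_n\le Q_j\le\kappa Q_n}(u_{ij}-u_{in})\ge0$. *)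

From HB Require Import structures.
From mathcomp Require Import all_boot all_order all_algebra.
From mathcomp Require Import all_classical all_reals all_analysis.
Set Implicit Arguments. Unset Strict Implicit. Unset Printing Implicit Defensive.
Import Order.TTheory GRing.Theory Num.Theory.
Import numFieldNormedType.Exports.
Local Open Scope classical_set_scope.
Local Open Scope ring_scope.

Section Defs.
Variable R : realType.

Definition psum (p : nat -> R) (m : nat) : R := \sum_(i < m.+1) p i.

Definition weight (p : nat -> R) : Prop :=
  (forall m, 0 < p m) /\ (psum p @ \oo --> +oo).

Definition slowly_varying (L : R -> R) : Prop :=
  (forall t, 0 < t -> 0 < L t) /\
  measurable_fun (`]0, +oo[ : set R) L /\
  (forall lam, 0 < lam -> L (lam * t) / L t @[t --> +oo] --> (1 : R)).

Definition SVA_reg (alpha : R) (p : nat -> R) : Prop :=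
  (forall m, 0 < p m) /\
  exists L : R -> R, slowly_varying L /\
    forall m : nat, psum p m = powR (m.+1)%:R alpha * L m%:R.

Definition Pconv (a : nat -> nat -> R) (l : R) : Prop :=
  forall eps, 0 < eps -> exists n0 : nat,
    forall m n, (n0 <= m)%N -> (n0 <= n)%N -> `|a m n - l| < eps.

Definition wmean (p q : nat -> R) (u : nat -> nat -> R) (m n : nat) : R :=
  (psum p m * psum q n)^-1 *
  \sum_(i < m.+1) \sum_(j < n.+1) p i * q j * u i j.

Definition Nsummable (p q : nat -> R) (u : nat -> nat -> R) (l : R) : Prop :=
  Pconv (wmean p q u) l.

Definition liminf2 (a : nat -> nat -> \bar R) : \bar R :=
  limn (fun N : nat => ereal_inf [set a m n | m in [set m | (N <= m)%N] &
                                              n in [set n | (N <= n)%N]]).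

Definition minP (p : nat -> R) (u : nat -> nat -> R) (lam : R) (m n : nat)
  : \bar R :=
  ereal_inf [set ((u i n - u m n)%:E) | i in
              [set i | psum p m <= psum p i <= lam * psum p m]].

Definition minQ (q : nat -> R) (u : nat -> nat -> R) (kap : R) (m n : nat)
  : \bar R :=
  ereal_inf [set ((u m j - u m n)%:E) | j in
              [set j | psum q n <= psum q j <= kap * psum q n]].

Definition slow_decr_P (p : nat -> R) (u : nat -> nat -> R) : Prop :=
  (0 <= lim ((fun lam => liminf2 (minP p u lam)) @ 1^'+))%E.

Definition slow_decr_Q (q : nat -> R) (u : nat -> nat -> R) : Prop :=
  (0 <= lim ((fun kap => liminf2 (minQ q u kap)) @ 1^'+))%E.

Definition minPQ (p q : nat -> R) (f : nat -> nat -> nat -> nat -> R)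
  (lk : R * R) (m n : nat) : \bar R :=
  ereal_inf [set ((f i j m n)%:E) | i in
              [set i | psum p m <= psum p i <= lk.1 * psum p m] &
              j in [set j | psum q n <= psum q j <= lk.2 * psum q n]].

Definition slow_decr_P_strong (p q : nat -> R) (u : nat -> nat -> R) : Prop :=
  (0 <= lim ((fun lk => liminf2 (minPQ p q (fun i j m n => (u i j - u m j)%R) lk))
              @ filter_prod 1^'+ 1^'+))%E.

Definition slow_decr_Q_strong (p q : nat -> R) (u : nat -> nat -> R) : Prop :=
  (0 <= lim ((fun lk => liminf2 (minPQ p q (fun i j m n => (u i j - u i n)%R) lk))
              @ filter_prod 1^'+ 1^'+))%E.

End Defs.

From HB Require Import structures.
From mathcomp Require Import all_boot all_order all_algebra.
From mathcomp Require Import all_classical all_reals all_analysis.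
From mathcomp Require Import ring lra.
Import Order.TTheory GRing.Theory Num.Theory.

(* Given [m, n], pick [b, d] with [P_b ~ lam P_m] and [Q_d ~ lam Q_n].  Because
   [P_(k+1) / P_k -> 1], the weights of the rectangle [(m, b] x (n, d]] are comparable
   to its corner sums, so the weighted means at the four corners determine the
   weighted average of [u] over the rectangle up to their distance to [l].  Slow
   decrease in [i], then in [j] (chained through [(i, n)]), keeps [u] above
   [u m n - e] on the rectangle, whence [u m n <= l + O(e)]; the rectangle
   [(a, m] x (c, n]] below [(m, n)] gives [u m n >= l - O(e)].  The liminf in the
   one-sided conditions is taken jointly in [m, n], so they are uniform in the other
   index and slow decrease in the strong sense is not needed.
   [P_(k+1) / P_k -> 1] comes from regular variation: for a slowly varying [L] the
   limit [L (e^x n) / L n -> 1] is uniform in [n >= K] on a subset of [[0, 1]] of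
   measure [> 3/4], and such a subset meets its translate by [ln ((n + 2) / (n + 1))]. *)

Set Implicit Arguments. Unset Strict Implicit. Unset Printing Implicit Defensive.
Local Open Scope classical_set_scope.
Local Open Scope ring_scope.

Section partial_sums.
Variables (R : realType) (p : nat -> R).
Hypothesis p_gt0 : forall m, 0 < p m.

Lemma psumS m : psum p m.+1 = psum p m + p m.+1.
Proof. by rewrite /psum big_ord_recr. Qed.

Lemma psum_gt0 m : 0 < psum p m.
Proof.
by elim: m => [|m IHm]; rewrite ?psumS ?addr_gt0// /psum big_ord1.
Qed.

Lemma psum_lt i m : (i < m)%N -> psum p i < psum p m.
Proof.
elim: m => [//|m IHm]; rewrite ltnS leq_eqVlt psumS => /orP[/eqP->|/IHm im].
  by rewrite ltrDl.
by rewrite (lt_le_trans im)// lerDl ltW.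
Qed.

Lemma psum_le i m : (i <= m)%N -> psum p i <= psum p m.
Proof. by rewrite leq_eqVlt => /orP[/eqP->//|/psum_lt/ltW]. Qed.

Lemma psum_le_idx i m : psum p i <= psum p m -> (i <= m)%N.
Proof. by apply: contraTT; rewrite -ltnNge -ltNge => /psum_lt. Qed.

Lemma psum_lt_idx i m : psum p i < psum p m -> (i < m)%N.
Proof. by apply: contraTT; rewrite -leqNgt -leNgt => /psum_le. Qed.

Hypothesis p_unbounded : psum p @ \oo --> +oo.

Lemma exists_psum_last_le (lam : R) m : 1 <= lam ->
  exists b, [/\ (m <= b)%N, psum p b <= lam * psum p m
              & lam * psum p m < psum p b.+1].
Proof.
move=> lam1; have lePm : psum p m <= lam * psum p m.
  by rewrite ler_peMl// ltW// psum_gt0.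
have /cvgryPgt/(_ (lam * psum p m))[K _ hK] := p_unbounded.
have bounded i : psum p i <= lam * psum p m -> (i <= K)%N.
  by move=> hi; rewrite leqNgt; apply/negP => /ltnW /hK /=; rewrite ltNge hi.
have [b hb bmax] := ex_maxnP (ex_intro _ m lePm) bounded.
exists b; split => //; first exact: bmax.
by rewrite ltNge; apply/negP => /bmax; rewrite ltnn.
Qed.

Lemma exists_psum_last_lt (lam : R) m N : 1 <= lam -> lam * psum p N < psum p m ->
  exists a, [/\ (N <= a < m)%N, lam * psum p a < psum p m
              & psum p m <= lam * psum p a.+1].
Proof.
move=> lam1 hN.
have lePm i : psum p i <= lam * psum p i by rewrite ler_peMl// ltW// psum_gt0.
have bounded i : lam * psum p i < psum p m -> (i < m)%N.
  by move=> hi; apply: psum_lt_idx; exact: le_lt_trans (lePm i) hi.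
have bounded' i : lam * psum p i < psum p m -> (i <= m)%N by move/bounded/ltnW.
have [a ha amax] := ex_maxnP (ex_intro _ N hN) bounded'.
exists a; split => //; first by rewrite amax//= bounded.
by rewrite leNgt; apply/negP => /amax; rewrite ltnn.
Qed.

End partial_sums.

Section rectangle_sums.
Variable R : realType.

Definition corner_sum (f : nat -> nat -> R) x y :=
  \sum_(i < x.+1) \sum_(j < y.+1) f i j.

Definition rect_sum (f : nat -> nat -> R) a b c d :=
  \sum_(a.+1 <= i < b.+1) \sum_(c.+1 <= j < d.+1) f i j.

Lemma rect_sumE f a b c d : (a <= b)%N -> (c <= d)%N ->
  rect_sum f a b c d =
  corner_sum f b d - corner_sum f a d - corner_sum f b c + corner_sum f a c.
Proof.
move=> ab cd; pose row i y := \sum_(0 <= j < y.+1) f i j.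
have cornerE x y : corner_sum f x y = \sum_(0 <= i < x.+1) row i y.
  by rewrite /corner_sum big_mkord; apply: eq_bigr => i _; rewrite /row big_mkord.
have rowE i : row i d = row i c + \sum_(c.+1 <= j < d.+1) f i j.
  by rewrite /row -big_cat_nat.
have colE y : \sum_(0 <= i < b.+1) row i y =
    \sum_(0 <= i < a.+1) row i y + \sum_(a.+1 <= i < b.+1) row i y.
  by rewrite -big_cat_nat.
rewrite !cornerE !colE /rect_sum.
under [X in _ = _ + X - _ - _ + _]eq_bigr do rewrite rowE.
rewrite big_split /=; lra.
Qed.

Lemma ler_rect_sum f g a b c d :
  (forall i j, (a < i <= b)%N -> (c < j <= d)%N -> f i j <= g i j) ->
  rect_sum f a b c d <= rect_sum g a b c d.
Proof.
move=> fg; apply: ler_sum_nat => i /andP[ai ib]; apply: ler_sum_nat => j /andP[cj jd].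
by apply: fg; apply/andP; split; rewrite // -ltnS.
Qed.

Lemma rect_sumZ v f a b c d :
  v * rect_sum f a b c d = rect_sum (fun i j => v * f i j) a b c d.
Proof.
by rewrite /rect_sum mulr_sumr; apply: eq_bigr => i _; rewrite mulr_sumr.
Qed.

End rectangle_sums.

Definition gap_factor (R : realType) (th : R) := (th + 1) / (th - 1).

Lemma le_gap_factor (R : realType) (th x y : R) : 1 < th -> 0 < y -> th * y <= x ->
  x + y <= gap_factor th * (x - y).
Proof.
move=> th1 y0 hx; have th10 : 0 < th - 1 by rewrite subr_gt0.
by rewrite /gap_factor mulrAC ler_pdivlMr //; nra.
Qed.

Section weighted_rectangles.
Variables (R : realType) (p q : nat -> R) (u : nat -> nat -> R) (l : R).
Hypotheses (p_gt0 : forall m, 0 < p m) (q_gt0 : forall n, 0 < q n).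

Let P := psum p.
Let Q := psum q.
Let P_gt0 m : 0 < P m := psum_gt0 p_gt0 m.
Let Q_gt0 n : 0 < Q n := psum_gt0 q_gt0 n.

Lemma rect_sum_weights a b c d : (a <= b)%N -> (c <= d)%N ->
  rect_sum (fun i j => p i * q j) a b c d = (P b - P a) * (Q d - Q c).
Proof.
have cornerE x y : corner_sum (fun i j => p i * q j) x y = P x * Q y.
  rewrite /corner_sum /P /Q /psum big_distrl /=.
  by apply: eq_bigr => i _; rewrite big_distrr.
by move=> ab cd; rewrite rect_sumE// !cornerE; ring.
Qed.

Lemma corner_sum_wmean x y :
  corner_sum (fun i j => p i * q j * u i j) x y = P x * Q y * wmean p q u x y.
Proof. by rewrite /wmean mulrA mulfV ?mul1r// mulf_neq0// gt_eqF. Qed.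

Lemma rect_sum_wmean_near th rho a b c d :
  1 < th -> th * P a <= P b -> th * Q c <= Q d -> (a <= b)%N -> (c <= d)%N ->
  (forall x y, (a <= x)%N -> (c <= y)%N -> `|wmean p q u x y - l| <= rho) ->
  `|rect_sum (fun i j => p i * q j * u i j) a b c d - l * ((P b - P a) * (Q d - Q c))|
    <= rho * gap_factor th ^+ 2 * ((P b - P a) * (Q d - Q c)).
Proof.
move=> th1 thab thcd ab cd near.
have rho0 : 0 <= rho by apply: le_trans (near a c _ _).
set e := fun x y => wmean p q u x y - l.
have corner x y X Y : 0 <= X -> 0 <= Y -> (a <= x)%N -> (c <= y)%N ->
    `|X * Y * e x y| <= rho * (X * Y).
  move=> X0 Y0 ax cy; rewrite normrM ger0_norm ?mulr_ge0// mulrC.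
  by apply: ler_wpM2r; [exact: mulr_ge0|exact: near].
rewrite rect_sumE// !corner_sum_wmean.
have -> : P b * Q d * wmean p q u b d - P a * Q d * wmean p q u a d -
    P b * Q c * wmean p q u b c + P a * Q c * wmean p q u a c -
    l * ((P b - P a) * (Q d - Q c)) =
  P b * Q d * e b d - P a * Q d * e a d - P b * Q c * e b c + P a * Q c * e a c.
  by rewrite /e; ring.
apply: (@le_trans _ _ (rho * ((P b + P a) * (Q d + Q c)))).
  have bd := corner b d _ _ (ltW (P_gt0 b)) (ltW (Q_gt0 d)) ab cd.
  have ad := corner a d _ _ (ltW (P_gt0 a)) (ltW (Q_gt0 d)) (leqnn a) cd.
  have bc := corner b c _ _ (ltW (P_gt0 b)) (ltW (Q_gt0 c)) ab (leqnn c).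
  have ac := corner a c _ _ (ltW (P_gt0 a)) (ltW (Q_gt0 c)) (leqnn a) (leqnn c).
  set xbd := P b * Q d * e b d in bd *; set xad := P a * Q d * e a d in ad *.
  set xbc := P b * Q c * e b c in bc *; set xac := P a * Q c * e a c in ac *.
  have tri : `|xbd - xad - xbc + xac| <= `|xbd| + `|xad| + `|xbc| + `|xac|.
    by rewrite (le_trans (ler_normD _ _))// !lerD2r (le_trans (ler_normB _ _))//
      lerD2r ler_normB.
  by apply: le_trans tri _; nra.
rewrite -mulrA ler_wpM2l// expr2 mulrACA.
apply: ler_pM; try exact: le_gap_factor.
  exact: addr_ge0 (ltW (P_gt0 b)) (ltW (P_gt0 a)).
exact: addr_ge0 (ltW (Q_gt0 d)) (ltW (Q_gt0 c)).
Qed.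

Let rect_weight_gt0 th a b c d : 1 < th -> th * P a <= P b -> th * Q c <= Q d ->
  0 < (P b - P a) * (Q d - Q c).
Proof.
move=> th1 thab thcd.
by rewrite mulr_gt0// subr_gt0 (lt_le_trans _ thab, lt_le_trans _ thcd)// ltr_pMl.
Qed.

Lemma rect_wmean_lb th rho v a b c d :
  1 < th -> th * P a <= P b -> th * Q c <= Q d -> (a <= b)%N -> (c <= d)%N ->
  (forall x y, (a <= x)%N -> (c <= y)%N -> `|wmean p q u x y - l| <= rho) ->
  (forall i j, (a < i <= b)%N -> (c < j <= d)%N -> v <= u i j) ->
  v - l <= rho * gap_factor th ^+ 2.
Proof.
move=> th1 thab thcd ab cd near vu.
have W0 := rect_weight_gt0 th1 thab thcd.
have := rect_sum_wmean_near th1 thab thcd ab cd near.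
have : v * ((P b - P a) * (Q d - Q c)) <= rect_sum (fun i j => p i * q j * u i j) a b c d.
  rewrite -rect_sum_weights// rect_sumZ; apply: ler_rect_sum => i j ai cj.
  by rewrite [v * _]mulrC ler_wpM2l ?vu// mulr_ge0 ?(ltW (p_gt0 i)) ?(ltW (q_gt0 j)).
move=> lb /ler_normlP[_ ub]; rewrite -(ler_pM2r W0); nra.
Qed.

Lemma rect_wmean_ub th rho v a b c d :
  1 < th -> th * P a <= P b -> th * Q c <= Q d -> (a <= b)%N -> (c <= d)%N ->
  (forall x y, (a <= x)%N -> (c <= y)%N -> `|wmean p q u x y - l| <= rho) ->
  (forall i j, (a < i <= b)%N -> (c < j <= d)%N -> u i j <= v) ->
  l - v <= rho * gap_factor th ^+ 2.
Proof.
move=> th1 thab thcd ab cd near uv.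
have W0 := rect_weight_gt0 th1 thab thcd.
have := rect_sum_wmean_near th1 thab thcd ab cd near.
have : rect_sum (fun i j => p i * q j * u i j) a b c d <= v * ((P b - P a) * (Q d - Q c)).
  rewrite -rect_sum_weights// rect_sumZ; apply: ler_rect_sum => i j ai cj.
  by rewrite [v * _]mulrC ler_wpM2l ?uv// mulr_ge0 ?(ltW (p_gt0 i)) ?(ltW (q_gt0 j)).
move=> ub /ler_normlP[lb _]; rewrite -(ler_pM2r W0); nra.
Qed.

End weighted_rectangles.

Section double_liminf.
Variable R : realType.
Implicit Type a : nat -> nat -> \bar R.

Definition tail_inf a N : \bar R :=
  ereal_inf [set a m n | m in [set m | (N <= m)%N] & n in [set n | (N <= n)%N]].

Lemma tail_inf_nd a : nondecreasing_seq (tail_inf a).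
Proof.
move=> N N' NN'; apply: ereal_inf_le_tmp => _ [m Nm [n Nn <-]].
by exists m; [exact: leq_trans Nm|exists n => //; exact: leq_trans Nn].
Qed.

Lemma liminf2E a : liminf2 a = ereal_sup (range (tail_inf a)).
Proof. by apply/cvg_lim => //; apply: ereal_nondecreasing_cvgn; exact: tail_inf_nd. Qed.

Lemma liminf2_le a b : (forall m n, (a m n <= b m n)%E) -> (liminf2 a <= liminf2 b)%E.
Proof.
move=> ab; rewrite !liminf2E; apply: ge_ereal_sup => _ [N _ <-].
apply: le_trans (ereal_sup_ubound _) => /=; last by exists N.
apply/ereal_infP => _ [m Nm [n Nn <-]]; apply: le_trans (ab m n).
by apply: ereal_inf_lbound; exists m => //; exists n.
Qed.

Lemma liminf2_gtP a (x : \bar R) : (x < liminf2 a)%E ->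
  exists N, forall m n, (N <= m)%N -> (N <= n)%N -> (x < a m n)%E.
Proof.
rewrite liminf2E => /ereal_sup_gt[_ [N _ <-] xN]; exists N => m n Nm Nn.
by apply: lt_le_trans xN _; apply: ereal_inf_lbound; exists m => //; exists n.
Qed.

Lemma liminf2_transpose a : liminf2 (fun m n => a n m) = liminf2 a.
Proof.
have tail_infT : tail_inf (fun m n => a n m) = tail_inf a.
  apply/funext => N; congr ereal_inf; apply/seteqP.
  by split => _ [m Nm [n Nn <-]]; exists n => //; exists m.
by rewrite !liminf2E tail_infT.
Qed.

(* Monotonicity in [lam] makes the right limit at 1 a supremum over [lam > 1]. *)
Lemma liminf2_right_lim_ge0 (f : R -> nat -> nat -> \bar R) :
  (forall x y m n, x <= y -> (f y m n <= f x m n)%E) ->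
  (0 <= lim ((fun lam => liminf2 (f lam)) @ 1^'+))%E ->
  forall e : R, 0 < e -> exists2 lam, 1 < lam &
    exists N, forall m n, (N <= m)%N -> (N <= n)%N -> (- e%:E < f lam m n)%E.
Proof.
move=> f_ni lim_ge0 e e0.
have f_ni' x y : x <= y -> (liminf2 (f y) <= liminf2 (f x))%E.
  by move=> xy; apply: liminf2_le => m n; exact: f_ni.
have := @nonincreasing_at_right_cvge R (fun lam => liminf2 (f lam)) 1 +oo%O isT
  (fun x y _ _ => f_ni' x y).
move/cvg_lim => lim_right; rewrite lim_right// in lim_ge0.
have e_lt0 : (- e%:E < 0)%E by rewrite -EFinN lte_fin oppr_lt0.
have /ereal_sup_gt[_ [lam lam1 <-] elam] := lt_le_trans e_lt0 lim_ge0.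
by exists lam; [move: lam1; rewrite /= in_itv andbT|exact: liminf2_gtP].
Qed.

End double_liminf.

Section slow_decrease.
Variable R : realType.

Lemma slow_decr_P_eventually (p : nat -> R) u : (forall m, 0 < p m) -> slow_decr_P p u ->
  forall e : R, 0 < e -> exists2 lam, 1 < lam & exists N, forall m n i,
    (N <= m)%N -> (N <= n)%N -> psum p m <= psum p i <= lam * psum p m ->
    - e < u i n - u m n.
Proof.
move=> p_gt0 slow e e0.
have minP_ni x y m n : x <= y -> (minP p u y m n <= minP p u x m n)%E.
  move=> xy; apply: ereal_inf_le_tmp => _ [i /andP[Pmi Pix] <-].
  by exists i => //=; rewrite Pmi (le_trans Pix)// ler_wpM2r// ltW// psum_gt0.
have [lam lam1 [N minP_gt]] := liminf2_right_lim_ge0 minP_ni slow e0.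
exists lam => //; exists N => m n i Nm Nn Pi.
rewrite -lte_fin EFinN (lt_le_trans (minP_gt m n Nm Nn))//.
by apply: ereal_inf_lbound; exists i.
Qed.

Lemma slow_decr_Q_eventually (q : nat -> R) u : (forall n, 0 < q n) -> slow_decr_Q q u ->
  forall e : R, 0 < e -> exists2 lam, 1 < lam & exists N, forall m n j,
    (N <= m)%N -> (N <= n)%N -> psum q n <= psum q j <= lam * psum q n ->
    - e < u m j - u m n.
Proof.
move=> q_gt0.
have minQT kap : liminf2 (minQ q u kap) = liminf2 (minP q (fun i j => u j i) kap).
  exact: (liminf2_transpose (fun m n => minP q (fun i j => u j i) kap m n)).
rewrite /slow_decr_Q; under eq_fun do rewrite minQT.
move=> /(slow_decr_P_eventually q_gt0) slow e /slow[lam lam1 [N slowN]].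
by exists lam => //; exists N => m n j Nm Nn; exact: slowN.
Qed.

End slow_decrease.

Definition slow_decr_rect (R : realType) (p q : nat -> R) (u : nat -> nat -> R) :=
  forall e : R, 0 < e -> exists2 lam, 1 < lam & exists N, forall m n i j,
    (N <= m)%N -> (N <= n)%N ->
    psum p m <= psum p i <= lam * psum p m -> psum q n <= psum q j <= lam * psum q n ->
    u m n - e < u i j.

Lemma slow_decr_rect_PQ (R : realType) (p q : nat -> R) u :
  (forall m, 0 < p m) -> (forall n, 0 < q n) -> slow_decr_P p u -> slow_decr_Q q u ->
  slow_decr_rect p q u.
Proof.
move=> p_gt0 q_gt0 slowP slowQ e e0; have e20 : 0 < e / 2 by rewrite divr_gt0.
have [lamP lamP1 [NP slowPN]] := slow_decr_P_eventually p_gt0 slowP e20.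
have [lamQ lamQ1 [NQ slowQN]] := slow_decr_Q_eventually q_gt0 slowQ e20.
exists (Num.min lamP lamQ); first by rewrite lt_min lamP1 lamQ1.
exists (maxn NP NQ) => m n i j; rewrite !geq_max => /andP[Pm Qm] /andP[Pn Qn].
move=> /andP[Pmi Pim] /andP[Qnj Qjn].
have mi : (m <= i)%N := psum_le_idx p_gt0 Pmi.
have Pi : psum p m <= psum p i <= lamP * psum p m.
  by rewrite Pmi (le_trans Pim)// ler_wpM2r ?ge_min ?lexx// ltW// psum_gt0.
have Qj : psum q n <= psum q j <= lamQ * psum q n.
  by rewrite Qnj (le_trans Qjn)// ler_wpM2r ?ge_min ?lexx ?orbT// ltW// psum_gt0.
have := slowPN m n i Pm Pn Pi; have := slowQN i n j (leq_trans Qm mi) Qn Qj; lra.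
Qed.

Definition ratio_to_one (R : realType) (p : nat -> R) := forall r : R, 1 < r ->
  exists K, forall k, (K <= k)%N -> psum p k.+1 <= r * psum p k.

Lemma le_of_ratio (R : realType) (th lam x y z : R) : 0 < th -> 0 < lam ->
  lam * x < y -> y <= lam / th * z -> th * x <= z.
Proof.
move=> th0 lam0 xy yz; have c0 : 0 < lam / th by rewrite divr_gt0.
rewrite -(ler_pM2l c0) mulrA divfK ?gt_eqF//.
exact: ltW (lt_le_trans xy yz).
Qed.

Section tauberian.
Variables (R : realType) (p q : nat -> R) (u : nat -> nat -> R) (l : R).
Hypotheses (wp : weight p) (wq : weight q) (summable : Pconv (wmean p q u) l).
Hypothesis slow : slow_decr_rect p q u.

Let p_gt0 : forall m, 0 < p m. Proof. by case: wp. Qed.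
Let q_gt0 : forall n, 0 < q n. Proof. by case: wq. Qed.
Let P := psum p.
Let Q := psum q.

Lemma tauberian_ub : ratio_to_one p -> ratio_to_one q ->
  forall e : R, 0 < e -> exists N, forall m n, (N <= m)%N -> (N <= n)%N -> u m n - l <= e.
Proof.
move=> ratio_p ratio_q e e0; have e20 : 0 < e / 2 by rewrite divr_gt0.
have [lam lam1 [N1 slowN]] := slow e20.
pose th := (1 + lam) / 2; have th1 : 1 < th by rewrite /th ltr_pdivlMr; lra.
have thlam : th < lam by rewrite /th ltr_pdivrMr; lra.
have C0 : 0 < gap_factor th ^+ 2 by rewrite exprn_gt0// divr_gt0; lra.
pose rho := e / 2 / gap_factor th ^+ 2; have rho0 : 0 < rho by rewrite divr_gt0.
have lamth1 : 1 < lam / th by rewrite ltr_pdivlMr ?mul1r//; lra.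
have [Kp ratioKp] := ratio_p _ lamth1; have [Kq ratioKq] := ratio_q _ lamth1.
have [n0 near] := summable rho0.
exists (maxn (maxn N1 n0) (maxn Kp Kq)) => m n.
rewrite !geq_max => /and3P[/andP[N1m n0m] Kpm Kqm] /and3P[/andP[N1n n0n] Kpn Kqn].
have [b [mb Pb Pb1]] := exists_psum_last_le p_gt0 wp.2 m (ltW lam1).
have [d [nd Qd Qd1]] := exists_psum_last_le q_gt0 wq.2 n (ltW lam1).
have thPb : th * P m <= P b.
  by apply: le_of_ratio Pb1 (ratioKp _ (leq_trans Kpm mb)); lra.
have thQd : th * Q n <= Q d.
  by apply: le_of_ratio Qd1 (ratioKq _ (leq_trans Kqn nd)); lra.
suff : u m n - e / 2 - l <= rho * gap_factor th ^+ 2.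
  rewrite /rho divfK ?gt_eqF//; lra.
apply: (rect_wmean_lb (u := u) p_gt0 q_gt0 th1 thPb thQd mb nd) => [x y mx ny|i j].
  by apply/ltW/near; [exact: leq_trans n0m mx|exact: leq_trans n0n ny].
move=> /andP[mi ib] /andP[nj jd]; apply/ltW/slowN => //; apply/andP; split.
- exact/psum_le/ltnW.
- exact: le_trans (psum_le p_gt0 ib) Pb.
- exact/psum_le/ltnW.
- exact: le_trans (psum_le q_gt0 jd) Qd.
Qed.

Lemma tauberian_lb :
  forall e : R, 0 < e -> exists N, forall m n, (N <= m)%N -> (N <= n)%N -> l - u m n <= e.
Proof.
move=> e e0; have e20 : 0 < e / 2 by rewrite divr_gt0.
have [lam lam1 [N1 slowN]] := slow e20.
pose th := (1 + lam) / 2; have th1 : 1 < th by rewrite /th ltr_pdivlMr; lra.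
have thlam : th < lam by rewrite /th ltr_pdivrMr; lra.
have C0 : 0 < gap_factor th ^+ 2 by rewrite exprn_gt0// divr_gt0; lra.
pose rho := e / 2 / gap_factor th ^+ 2; have rho0 : 0 < rho by rewrite divr_gt0.
have [n0 near] := summable rho0.
pose A := maxn N1 n0.
have /cvgryPgt/(_ (lam * P A))[Mp _ PM] := wp.2.
have /cvgryPgt/(_ (lam * Q A))[Mq _ QM] := wq.2.
exists (maxn Mp Mq) => m n; rewrite !geq_max => /andP[Mpm _] /andP[_ Mqn].
have [a [/andP[Aa am] Pam Pma]] := exists_psum_last_lt p_gt0 (ltW lam1) (PM m Mpm).
have [c [/andP[Ac cn] Qcn Qnc]] := exists_psum_last_lt q_gt0 (ltW lam1) (QM n Mqn).
have thPa : th * P a <= P m.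
  apply/ltW/(le_lt_trans _ Pam).
  by rewrite ler_wpM2r ?(ltW thlam) ?(ltW (psum_gt0 p_gt0 a)).
have thQc : th * Q c <= Q n.
  apply/ltW/(le_lt_trans _ Qcn).
  by rewrite ler_wpM2r ?(ltW thlam) ?(ltW (psum_gt0 q_gt0 c)).
suff : l - (u m n + e / 2) <= rho * gap_factor th ^+ 2.
  rewrite /rho divfK ?gt_eqF//; lra.
apply: (rect_wmean_ub (u := u) p_gt0 q_gt0 th1 thPa thQc (ltnW am) (ltnW cn)).
  move=> x y ax cy; apply/ltW/near.
    by rewrite (leq_trans _ ax)// (leq_trans _ Aa)// leq_maxr.
  by rewrite (leq_trans _ cy)// (leq_trans _ Ac)// leq_maxr.
move=> i j /andP[ai im] /andP[cj jn].
have N1i : (N1 <= i)%N by rewrite (leq_trans _ (ltnW ai))// (leq_trans _ Aa)// leq_maxl.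
have N1j : (N1 <= j)%N by rewrite (leq_trans _ (ltnW cj))// (leq_trans _ Ac)// leq_maxl.
suff : u i j - e / 2 < u m n by lra.
apply: slowN => //; apply/andP; split.
- exact: psum_le.
- apply: le_trans Pma _; rewrite ler_wpM2l ?(ltW (lt_trans ltr01 lam1))//.
  exact: psum_le.
- exact: psum_le.
- apply: le_trans Qnc _; rewrite ler_wpM2l ?(ltW (lt_trans ltr01 lam1))//.
  exact: psum_le.
Qed.

Lemma tauberian : ratio_to_one p -> ratio_to_one q -> Pconv u l.
Proof.
move=> ratio_p ratio_q e e0; have e20 : 0 < e / 2 by rewrite divr_gt0.
have [N1 ub] := tauberian_ub ratio_p ratio_q e20.
have [N2 lb] := tauberian_lb e20.
exists (maxn N1 N2) => m n; rewrite !geq_max => /andP[N1m N2m] /andP[N1n N2n].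
have := ub m n N1m N1n; have := lb m n N2m N2n.
by rewrite ltr_norml => ? ?; apply/andP; split; lra.
Qed.

End tauberian.

Section lebesgue_shift.
Variable R : realType.

Lemma measurable_shift (h : R) :
  measurable_fun (T := measurableTypeR R) (U := measurableTypeR R) [set: R] (+%R^~ h).
Proof. by apply: measurable_realfun.measurable_funD => //; exact: measurable_cst. Qed.

Lemma lebesgue_measure_shift (h : R) (A : set R) : measurable A ->
  lebesgue_measure ((+%R^~ h) @^-1` A) = lebesgue_measure A.
Proof.
move=> mA; symmetry.
unshelve refine (@lebesgue_measure_unique R
  (@pushforward _ _ (measurableTypeR R) (measurableTypeR R) R lebesgue_measure
    (+%R^~ h)) _ A mA); first exact: measurable_shift.
move=> X [[a b] _ <-] /=; rewrite /pushforward.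
have -> : +%R^~ h @^-1` `]a, b] = `]a - h, b - h]%classic.
  by apply/seteqP; split => x /=; rewrite !in_itv /= ltrBlDr lerBrDr.
rewrite !lebesgue_measure_itv /= !lte_fin ltrD2r.
by case: ifP => // _; rewrite -!EFinD; congr (_%:E); ring.
Qed.

(* Otherwise [A] and [A - h] would be disjoint subsets of [[-1/4, 1]], of total
   measure [2 * lebesgue_measure A > 3/2 > 5/4]. *)
Lemma lebesgue_shift_overlap (A : set R) (h : R) : measurable A -> A `<=` `[0, 1]%classic ->
  0 <= h <= 1/4 -> ((3/4)%:E < lebesgue_measure A)%E -> exists x, A x /\ A (x + h).
Proof.
move=> mA A01 /andP[h0 h14] A34; apply: contrapT => no_overlap.
set B := (+%R^~ h) @^-1` A.
have mB : measurable B.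
  by rewrite /B -[X in measurable X]setTI; exact: measurable_shift.
have AB0 : A `&` B = set0.
  by apply/seteqP; split => // x [Ax Bx]; apply: no_overlap; exists x.
have AB_sub : A `|` B `<=` `[-(1/4), 1].
  move=> x [/A01|/A01]; rewrite /= !in_itv /= => /andP[x0 x1]; apply/andP; split; lra.
have AB2A : lebesgue_measure (A `|` B) = (lebesgue_measure A + lebesgue_measure A)%E.
  by rewrite measureU//; congr (_ + _)%E; exact: lebesgue_measure_shift.
have : (lebesgue_measure (A `|` B) <= lebesgue_measure (`[-(1/4), 1]%classic%R : set R))%E.
  by apply: le_measure => //; rewrite inE//; exact: measurableU.
rewrite AB2A lebesgue_measure_itv /= lte_fin ifT; last lra.
move/(lt_le_trans (lteD A34 A34)); rewrite -EFinD -EFinB lte_fin; lra.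
Qed.

End lebesgue_shift.

Section slowly_varying_sequences.
Variables (R : realType) (L : R -> R).
Hypothesis L_sv : slowly_varying L.

Let L_gt0 t : 0 < t -> 0 < L t. Proof. by case: L_sv => L_gt0 _; exact: L_gt0. Qed.

Lemma slowly_varying_nat (lam e : R) : 0 < lam -> 0 < e ->
  exists K, forall n, (K <= n)%N ->
    (1 - e) * L n.+1%:R <= L (lam * n.+1%:R) <= (1 + e) * L n.+1%:R.
Proof.
move=> lam0 e0; have [_ [_ /(_ lam lam0) L_ratio]] := L_sv.
have nat_cvg : (fun n : nat => n.+1%:R : R) @ \oo --> +oo.
  apply/cvgryPge => A; near=> n; apply: le_trans (_ : n%:R <= _); last by rewrite ler_nat.
  by near: n; exact: nbhs_infty_ger.
have /cvgrPdist_le/(_ e e0)[K _ near_one] := cvg_comp _ _ nat_cvg L_ratio.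
exists K => n /near_one /=; rewrite ler_distlC => /andP[lo hi].
by rewrite -ler_pdivlMr ?L_gt0// lo -ler_pdivrMr ?L_gt0// hi.
Unshelve. all: by end_near.
Qed.

Definition sv_good_set (e : R) (K : nat) : set R :=
  \bigcap_(n in [set n | (K <= n)%N])
    (`[0, 1] `&` (fun x => L (expR x * n.+1%:R)) @^-1`
       `[(1 - e) * L n.+1%:R, (1 + e) * L n.+1%:R]).

Lemma measurable_sv_good_set e K : measurable (sv_good_set e K).
Proof.
apply: bigcap_measurable; first by exists K => /=.
move=> n _.
suff mL : measurable_fun (`[0, 1] : set R) (L \o (fun x => expR x * n.+1%:R)).
  exact: mL.
apply: (measurable_comp (F := (`]0, +oo[ : set R))) => //.
- move=> _ [x _ <-] /=; rewrite in_itv /= andbT.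
  by rewrite mulr_gt0 ?expR_gt0 ?ltr0n.
- by case: L_sv => _ [].
- apply: (measurable_funS (E := setT)) => //.
  apply: measurable_realfun.measurable_funM; last exact: measurable_cst.
  exact: measurable_realfun.measurable_expR.
Qed.

Lemma sv_good_set_sub e K : sv_good_set e K `<=` `[0, 1]%classic.
Proof. by move=> x /(_ K (leqnn K))[]. Qed.

Lemma sv_good_set_nd e : nondecreasing_seq (sv_good_set e).
Proof. by move=> K K' KK' /=; apply/subsetPset => x gx n Kn; apply/gx/(leq_trans KK'). Qed.

Lemma bigcup_sv_good_set e : 0 < e -> \bigcup_K sv_good_set e K = `[0, 1]%classic.
Proof.
move=> e0; apply/seteqP; split => [x [K _ /sv_good_set_sub//]|x x01].
have [K nearK] := slowly_varying_nat (expR_gt0 x) e0.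
by exists K => // n /= Kn; split => //; rewrite /= in_itv /= nearK.
Qed.

Lemma large_sv_good_set e : 0 < e ->
  exists K, ((3/4)%:E < lebesgue_measure (sv_good_set e K))%E.
Proof.
move=> e0; have mU : measurable (\bigcup_K sv_good_set e K).
  by rewrite bigcup_sv_good_set//; exact: measurable_itv.
have U1 : lebesgue_measure (\bigcup_K sv_good_set e K) = 1%:E.
  rewrite bigcup_sv_good_set//; have := @lebesgue_measure_itv R `[0, 1]%R.
  by rewrite /= lte_fin ltr01 /= oppr0 adde0.
have : lebesgue_measure (sv_good_set e K) @[K --> \oo] --> 1%:E.
  rewrite -U1; exact: (nondecreasing_cvg_mu (mu := lebesgue_measure)
    (measurable_sv_good_set e) mU (sv_good_set_nd e)).
have lt1 : (3/4 : R) < 1 by lra.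
move=> /fine_cvgP[[K1 _ fin] /cvgr_gt/(_ _ lt1)[K2 _ gt34]].
exists (maxn K1 K2).
by rewrite -(fineK (fin _ (leq_maxl _ _))) lte_fin gt34//= leq_maxr.
Qed.

Lemma slowly_varying_succ e : 0 < e ->
  exists K, forall n, (K <= n)%N -> (1 - e) * L n.+2%:R <= (1 + e) * L n.+1%:R.
Proof.
move=> e0; have [K large] := large_sv_good_set e0.
exists (maxn K 3) => n; rewrite geq_max => /andP[Kn n3].
have n1_gt0 : 0 < n.+1%:R :> R by rewrite ltr0n.
pose h := ln (n.+2%:R / n.+1%:R : R).
have ratioE : n.+2%:R / n.+1%:R = 1 + n.+1%:R^-1 :> R.
  by rewrite -addn1 natrD mulrDl mulfV ?gt_eqF// mul1r addrC.
have h0 : 0 <= h by rewrite /h ln_ge0// ratioE lerDl invr_ge0 ltW.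
have h14 : h <= 1/4.
  rewrite /h ratioE; apply: le_trans (le_ln1Dx _) _.
    by rewrite (lt_le_trans (ltrN10 R))// invr_ge0 ltW.
  by rewrite mul1r lef_pV2 ?posrE// ?ler_nat//; lra.
have [x [gx gxh]] := lebesgue_shift_overlap (measurable_sv_good_set e K)
  (@sv_good_set_sub e K) (introT andP (conj h0 h14)) large.
have [_ /andP[+ _]] := gx n.+1 (leq_trans Kn (leqnSn n)).
have [_ /andP[_ +]] := gxh n Kn.
have -> : expR (x + h) * n.+1%:R = expR x * n.+2%:R.
  by rewrite expRD /h lnK ?posrE ?divr_gt0 ?ltr0n// -mulrA divfK ?gt_eqF.
rewrite !bnd_simp => hi lo; exact: le_trans lo hi.
Qed.

End slowly_varying_sequences.

Lemma expR_le1D (R : realType) (t d : R) : 0 <= t -> 0 < d -> t * (1 + d) <= d ->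
  expR t <= 1 + d.
Proof.
move=> t0 d0 td.
have expR_1B : expR t * (1 - t) <= 1.
  have := expR_ge1Dx (- t); rewrite -(ler_pM2l (expR_gt0 t)) -expRD subrr expR0.
  by rewrite mulrC.
have t1 : 0 < 1 - t.
  have : t <= d / (1 + d) by rewrite ler_pdivlMr//; lra.
  have : d / (1 + d) < 1 by rewrite ltr_pdivrMr//; lra.
  lra.
by rewrite -(ler_pM2r t1); apply: le_trans expR_1B _; nra.
Qed.

Lemma powR_succ_ratio (R : realType) (alpha r : R) : 0 <= alpha -> 1 < r ->
  exists K, forall k, (K <= k)%N -> k.+2%:R `^ alpha <= r * k.+1%:R `^ alpha.
Proof.
move=> alpha0 r1; pose d := r - 1; have d0 : 0 < d by rewrite subr_gt0.
exists (Num.truncn (alpha * (1 + d) / d)).+1 => k Kk.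
have k0 : 0 < k.+1%:R :> R by rewrite ltr0n.
pose s := 1 + k.+1%:R^-1 : R; have s0 : 0 < s by rewrite addr_gt0// invr_gt0.
have -> : k.+2%:R = k.+1%:R * s :> R.
  by rewrite mulrDr mulr1 mulfV ?gt_eqF// -addn1 natrD.
rewrite powRM ?(ltW k0) ?(ltW s0)// [r * _]mulrC ler_wpM2l ?powR_ge0//.
have -> : s `^ alpha = expR (alpha * ln s) by rewrite -ln_powR lnK// posrE powR_gt0.
pose t := alpha * k.+1%:R^-1; have t0 : 0 <= t by rewrite mulr_ge0// invr_ge0 ltW.
have -> : r = 1 + d by rewrite /d addrC subrK.
apply: le_trans (expR_le1D t0 d0 _).
  rewrite ler_expR /t ler_wpM2l// le_ln1Dx//.
  by rewrite (lt_le_trans (ltrN10 R))// invr_ge0 ltW.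
rewrite /t mulrAC ler_pdivrMr// [d * _]mulrC.
have : alpha * (1 + d) / d < k.+1%:R.
  by rewrite (lt_le_trans (truncnS_gt _))// ler_nat (leq_trans Kk).
by rewrite ltr_pdivrMr// => /ltW.
Qed.

Lemma SVA_reg_ratio_to_one (R : realType) (alpha : R) p : 0 <= alpha ->
  SVA_reg alpha p -> ratio_to_one p.
Proof.
move=> alpha0 [p_gt0 [L [L_sv PL]]] r r1.
pose s := Num.min (r - 1) 1 / 3.
have s0 : 0 < s by rewrite divr_gt0// lt_min subr_gt0 r1 ltr01.
have s_le : s <= (r - 1) / 3 by rewrite ler_pM2r ?invr_gt0// ge_min lexx.
have s_le1 : s <= 1 / 3 by rewrite ler_pM2r ?invr_gt0// ge_min lexx orbT.
have s2r : (1 + s) * (1 + s) <= r by nra.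
pose e := s / (2 + s); have e0 : 0 < e by rewrite divr_gt0//; lra.
have e1 : 0 < 1 - e by rewrite subr_gt0 ltr_pdivrMr; lra.
have [KL L_succ] := slowly_varying_succ L_sv e0.
have s1 : 1 < 1 + s by rewrite ltrDl.
have [Ka pow_succ] := powR_succ_ratio alpha0 s1.
exists (maxn KL.+1 Ka) => k; rewrite geq_max => /andP[KLk Kak].
have k0 : (0 < k)%N by exact: leq_trans KLk.
have L_gt0 n : 0 < L n.+1%:R by apply: L_sv.1; rewrite ltr0n.
have L_step : L k.+1%:R <= (1 + s) * L k%:R.
  have KLk1 : (KL <= k.-1)%N by rewrite -ltnS (ltn_predK k0).
  have := L_succ _ KLk1; rewrite (ltn_predK k0) => L_k; rewrite -(ler_pM2l e1).
  suff -> : (1 - e) * ((1 + s) * L k%:R) = (1 + e) * L k%:R by [].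
  by rewrite /e; field; lra.
rewrite !PL; apply: le_trans (_ : (1 + s) * k.+1%:R `^ alpha * ((1 + s) * L k%:R) <= _).
  by apply: ler_pM; rewrite ?powR_ge0 ?pow_succ// ltW// L_gt0.
have -> : (1 + s) * k.+1%:R `^ alpha * ((1 + s) * L k%:R) =
  ((1 + s) * (1 + s)) * (k.+1%:R `^ alpha * L k%:R) by ring.
by rewrite ler_wpM2r// mulr_ge0 ?powR_ge0// ltW// -(ltn_predK k0) L_gt0.
Qed.

Theorem theorem4p1 (R : realType) (alpha : R) (p q : nat -> R)
  (u : nat -> nat -> R) (l : R) :
  0 <= alpha ->
  weight p -> weight q ->
  SVA_reg alpha p -> SVA_reg alpha q ->
  Nsummable p q u l ->
  slow_decr_P p u -> slow_decr_Q q u ->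
  (slow_decr_P_strong p q u \/ slow_decr_Q_strong p q u) ->
  Pconv u l.
Proof.
move=> alpha0 wp wq svp svq summable slowP slowQ _.
have slow := slow_decr_rect_PQ wp.1 wq.1 slowP slowQ.
exact: tauberian wp wq summable slow (SVA_reg_ratio_to_one alpha0 svp)
  (SVA_reg_ratio_to_one alpha0 svq).
Qed.
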